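(* Let $s<d$. For each $M\in\mathbb{N}$ let $\alpha_1,\dots,\alpha_M>0$ and let $B_1,\dots,B_M\in\mathbb{R}^{s\times d}$ be random matrices with all entries independent, $[B_m]_{i,j}\sim\mathcal{N}(0,1/\alpha_m)$ for $i\ne j$ and $[B_m]_{i,i}\sim\mathcal{N}(1/\sqrt{\alpha_m},1/\alpha_m)$. Consider the server model $y=\frac{1}{M}\sum_{m=1}^M B_m\sqrt{\alpha_m}g_m^{sp}(\theta)+\gamma$ with random operator $L_M=\frac{1}{M}(\sqrt{\alpha_1}B_1,\dots,\sqrt{\alpha_M}B_M)$, and the eavesdropper model $y_E=\frac{1}{M}\sum_{m=1}^M H_{E_m}B_m\sqrt{\alpha_m}g_m^{sp}(\theta)+\gamma$ with random operator $L_{E,M}=\frac{1}{M}(\sqrt{\alpha_1}H_{E_1}B_1,\dots,\sqrt{\alpha_M}H_{E_M}B_M)$, where $H_{E_m}\in\mathbb{R}^{s\times s}$ are random matrices with no assumption on their distribution. If for every $M\in\mathbb{N}$ $$\mathbb{E}[\operatorname{cond}(H_{E_1}(C_1+I_{s\times d}),\dots,H_{E_M}(C_M+I_{s\times d}))]>\mathbb{E}[\operatorname{cond}(C_1+I_{s\times d},\dots,C_M+I_{s\times d})],$$ where $C_1,\dots,C_M\in\mathbb{R}^{s\times d}$ have independent $\mathcal{N}(0,1)$ entries, then the server model is inverse secure with respect to the eavesdropper model, i.e. $\mathbb{E}[\operatorname{cond}(L_{E,M})]>\mathbb{E}[\operatorname{cond}(L_M)]$ for all $M\in\mathbb{N}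$.
   Context: For a matrix $X$ with $s$ rows and at least $s$ columns, $\operatorname{cond}(X)=\sigma_1(X)/\sigma_s(X)$, the ratio of its largest and $s$-th largest singular values. $I_{s\times d}$ is the $s\times d$ matrix with ones on the main diagonal and zeros elsewhere; $(X_1,\dots,X_M)$ denotes horizontal concatenation. The vectors $g_m^{sp}(\theta)\in\mathbb{R}^d$ are users' sparsified gradients and $\gamma$ is additive Gaussian noise. A server model with random operator $L_M$ is inverse secure with respect to an eavesdropper model with random operator $L_{E,M}$ if $\mathbb{E}[\operatorname{cond}(L_{E,M})]>\mathbb{E}[\operatorname{cond}(L_M)]$ for all $M\in\mathbb{N}$. *)

From HB Require Import structures.
From mathcomp Require Import all_boot all_order all_algebra.
From mathcomp Require Import all_classical all_reals all_analysis.
Set Implicit Arguments. Unset Strict Implicit. Unset Printing Implicit Defensive.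
Import Order.TTheory GRing.Theory Num.Theory.
Local Open Scope classical_set_scope.
Local Open Scope ring_scope.

Section Defs.
Context {R : realType}.

Definition gram_ev_max (s n : nat) (X : 'M[R]_(s, n)) : R :=
  sup [set a : R | eigenvalue (X *m X^T) a].
Definition gram_ev_min (s n : nat) (X : 'M[R]_(s, n)) : R :=
  inf [set a : R | eigenvalue (X *m X^T) a].

(* sigma_1(X) and sigma_s(X): singular values are the square roots of the
   eigenvalues of X X^T (X has s rows and at least s columns). *)
Definition sigma_max (s n : nat) (X : 'M[R]_(s, n)) : R :=
  Num.sqrt (gram_ev_max X).
Definition sigma_min (s n : nat) (X : 'M[R]_(s, n)) : R :=
  Num.sqrt (gram_ev_min X).

Definition cond (s n : nat) (X : 'M[R]_(s, n)) : \bar R :=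
  if sigma_min X == 0 then +oo%E else (sigma_max X / sigma_min X)%:E.

Definition hcat (s d M : nat) (X : 'I_M -> 'M[R]_(s, d)) :
  'M[R]_(s, \sum_(m < M) d) := mxrow X.

Context {dT : measure_display} {T : measurableType dT} (P : probability T R).

Definition rv_meas (X : T -> R) := measurable_fun setT X.

Definition mutually_independent (I : finType) (X : I -> T -> R) :=
  forall A : I -> set R, (forall i, measurable (A i)) ->
    P (\bigcap_i (X i @^-1` A i)) = (\prod_(i : I) P (X i @^-1` A i))%E.

(* X has law N(mu, sigma^2), sigma = standard deviation *)
Definition has_normal_law (X : T -> R) (mu sigma : R) :=
  forall A : set R, measurable A -> P (X @^-1` A) = normal_prob mu sigma A.

Definition random_matrix (s d : nat) (X : T -> 'M[R]_(s, d)) :=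
  forall i j, rv_meas (fun w => X w i j).

Definition indep_gaussian_family (s d M : nat) (X : 'I_M -> T -> 'M[R]_(s, d))
    (mean : 'I_M -> 'I_s -> 'I_d -> R) (sd : 'I_M -> R) :=
  (forall m, random_matrix (X m)) /\
  mutually_independent (fun k : 'I_M * 'I_s * 'I_d =>
                          fun w => X k.1.1 w k.1.2 k.2) /\
  (forall m i j, has_normal_law (fun w => X m w i j) (mean m i j) (sd m)).

End Defs.

From HB Require Import structures.
From mathcomp Require Import all_boot all_order all_algebra.
From mathcomp Require Import all_classical all_reals all_analysis.
From mathcomp Require Import measurable_realfun ring lra.
Set Implicit Arguments. Unset Strict Implicit. Unset Printing Implicit Defensive.
Import Order.TTheory GRing.Theory Num.Theory.
Import numFieldNormedType.Exports.
Local Open Scope classical_set_scope.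
Local Open Scope ring_scope.

(* Writing C_m := sqrt(alpha_m) B_m - I_{s x d}, the entries of C_m are the
   standardisations of the Gaussian entries of B_m, so C_1, ..., C_M are
   independent standard Gaussian matrices.  Since sqrt(alpha_m) B_m = C_m + I,
   the operators L_M and L_{E,M} are 1/M times the concatenations appearing in
   the hypothesis, and cond is invariant under nonzero scaling (the Gram matrix
   scales by c^2, hence every singular value by |c|). *)

Section scaling.
Context {R : realType}.
Implicit Types (E : set R) (k : R).

Lemma has_sup_scale E k : 0 < k -> has_sup E -> has_sup [set k * x | x in E].
Proof.
move=> k0 [[x Ex] [u ubu]]; split; first by exists (k * x), x.
by exists (k * u) => _ [y Ey <-]; rewrite ler_pM2l // ubu.
Qed.

Lemma sup_scale E k : 0 < k -> sup [set k * x | x in E] = k * sup E.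
Proof.
move=> k0; set kE := [set k * x | x in E].
have EkE : E = [set k^-1 * y | y in kE].
  rewrite image_comp -[LHS]image_id; apply: eq_imagel => x _ /=.
  by rewrite mulKf ?gt_eqF.
have [hE|hE] := pselect (has_sup E); last first.
  rewrite (sup_out hE) mulr0 sup_out // => /(@has_sup_scale _ k^-1).
  by rewrite -EkE invr_gt0 => /(_ k0).
have hkE := has_sup_scale k0 hE.
apply/le_anti/andP; split.
  apply: ge_sup; first by case: hkE.
  by move=> _ [x Ex <-]; rewrite ler_pM2l // sup_upper_bound.
rewrite -ler_pdivlMl //; apply: ge_sup; first by case: hE.
move=> x Ex; rewrite ler_pdivlMl //; apply: sup_upper_bound => //.
by exists x.
Qed.

Lemma inf_scale E k : 0 < k -> inf [set k * x | x in E] = k * inf E.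
Proof.
move=> k0; rewrite /inf mulrN -sup_scale // !image_comp.
by congr (- sup _); apply: eq_imagel => x _ /=; rewrite mulrN.
Qed.

End scaling.

Lemma eigenvalueZ (F : fieldType) n (A : 'M[F]_n) k a : k != 0 ->
  eigenvalue (k *: A) (k * a) = eigenvalue A a.
Proof.
move=> k0; apply/eigenvalueP/eigenvalueP => -[v vA nz]; exists v => //.
  by apply: (scalerI k0); rewrite -scalemxAr in vA; rewrite vA scalerA.
by rewrite -scalemxAr vA scalerA.
Qed.

Lemma eigenvalue_setZ (F : fieldType) n (A : 'M[F]_n) k : k != 0 ->
  [set a | eigenvalue (k *: A) a] = [set k * a | a in [set a | eigenvalue A a]].
Proof.
move=> k0; apply/seteqP; split => [a /= kAa|_ [a /= Aa <-] /=].
  exists (k^-1 * a); last by rewrite mulVKf.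
  by rewrite /= -(eigenvalueZ _ _ k0) mulVKf.
by rewrite eigenvalueZ.
Qed.

Section condition_number.
Context {R : realType} (s n : nat).
Implicit Types (c : R) (X : 'M[R]_(s, n)).

Lemma gram_mxZ c X : (c *: X) *m (c *: X)^T = c ^+ 2 *: (X *m X^T).
Proof. by rewrite linearZ /= -scalemxAr -scalemxAl scalerA. Qed.

Lemma gram_ev_maxZ c X :
  c != 0 -> gram_ev_max (c *: X) = c ^+ 2 * gram_ev_max X.
Proof.
move=> c0; rewrite /gram_ev_max gram_mxZ eigenvalue_setZ ?expf_neq0 //.
by rewrite sup_scale // exprn_even_gt0.
Qed.

Lemma gram_ev_minZ c X :
  c != 0 -> gram_ev_min (c *: X) = c ^+ 2 * gram_ev_min X.
Proof.
move=> c0; rewrite /gram_ev_min gram_mxZ eigenvalue_setZ ?expf_neq0 //.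
by rewrite inf_scale // exprn_even_gt0.
Qed.

Lemma sigma_maxZ c X : c != 0 -> sigma_max (c *: X) = `|c| * sigma_max X.
Proof.
by move=> c0; rewrite /sigma_max gram_ev_maxZ // sqrtrM ?sqr_ge0 // sqrtr_sqr.
Qed.

Lemma sigma_minZ c X : c != 0 -> sigma_min (c *: X) = `|c| * sigma_min X.
Proof.
by move=> c0; rewrite /sigma_min gram_ev_minZ // sqrtrM ?sqr_ge0 // sqrtr_sqr.
Qed.

Lemma condZ c X : c != 0 -> cond (c *: X) = cond X.
Proof.
move=> c0; have c0' : `|c| != 0 by rewrite normr_eq0.
rewrite /cond (sigma_maxZ _ c0) (sigma_minZ _ c0) mulf_eq0 (negbTE c0') orFb.
case: ifP => // _; congr (_%:E).
by rewrite -mulf_div divff ?mul1r.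
Qed.

End condition_number.

Lemma measure_ocitv_unique {R : realType}
    (mu nu : {measure set (measurableTypeR R) -> \bar R}) :
    (forall n : nat, mu `](- n%:R)%R, n%:R%R]%classic < +oo)%E ->
    (forall a c : R, mu `]a, c]%classic = nu `]a, c]%classic) ->
  forall A, measurable A -> mu A = nu A.
Proof.
move=> mu_fin munu.
apply: (@measure_unique _ R (measurableTypeR R) (@ocitv R)
  (fun n : nat => `]- n%:R, n%:R]%classic) _ _ _ _ mu nu) => //.
- exact: ocitvI.
- by move=> n; exact: is_ocitv.
- apply/seteqP; split => // x _.
  have := archi_boundP (normr_ge0 x); rewrite ltr_norml => /andP[xl xr].
  by exists (Num.bound `|x|) => //=; rewrite in_itv /= xl ltW.
- by move=> _ [[a c] _ <-]; exact: munu.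
Qed.

Section affine_normal.
Context {R : realType}.
Variables (k b : R).
Hypothesis k_gt0 : 0 < k.
Let f (x : R) := k * x - b.

Lemma measurable_affine : measurable_fun setT f.
Proof. by apply: measurable_funB => //; apply: measurable_funM. Qed.

Let derivable_affine x : derivable f x 1.
Proof. by apply: derivableB => //; apply: derivableM. Qed.

Let continuous_affine : continuous f.
Proof.
by move=> x; apply/differentiable_continuous; rewrite -derivable1_diffP.
Qed.

Let derive1_affine : f^`()%classic = cst k.
Proof.
apply/funext => x; rewrite derive1E deriveB // deriveM // derive_id !derive_cst.
by rewrite scaler0 addr0 subr0; apply: mulr1.
Qed.

Lemma normal_pdf_affine m sg x : sg != 0 ->
  normal_pdf (f m) (k * sg) (f x) * k = normal_pdf m sg x.
Proof.
move=> sg0; have k0 : k != 0 by rewrite gt_eqF.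
rewrite !normal_pdfE ?mulf_neq0 // /normal_peak /normal_fun /f.
have -> : k * x - b - (k * m - b) = k * (x - m) by rewrite mulrBr; lra.
have -> : (k * sg) ^+ 2 * pi *+ 2 = k ^+ 2 * (sg ^+ 2 * pi *+ 2).
  by rewrite exprMn -mulrA -mulrnAr.
rewrite sqrtrM ?sqr_ge0 // sqrtr_sqr ger0_norm ?ltW //.
have -> : - (k * (x - m)) ^+ 2 / ((k * sg) ^+ 2 *+ 2) =
          - (x - m) ^+ 2 / (sg ^+ 2 *+ 2).
  by field; rewrite sg0.
have S0 : Num.sqrt (sg ^+ 2 * pi *+ 2) != 0.
  rewrite gt_eqF // sqrtr_gt0 pmulrn_lgt0 //.
  by rewrite mulr_gt0 ?pi_gt0 ?exprn_even_gt0.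
by field; rewrite S0.
Qed.

Let preimage_affine_itv a c :
  f @^-1` `]a, c] = `](a + b) / k, (c + b) / k]%classic.
Proof.
apply/seteqP; split => x /=; rewrite !in_itv /= ltr_pdivrMr // ler_pdivlMr //.
  by rewrite ![x * k]mulrC /f => /andP[xa xc]; apply/andP; split; lra.
by rewrite ![x * k]mulrC /f => /andP[xa xc]; apply/andP; split; lra.
Qed.

Lemma normal_prob_affine_itv m sg a c : sg != 0 ->
  normal_prob m sg (f @^-1` `]a, c]) = normal_prob (f m) (k * sg) `]a, c].
Proof.
move=> sg0; have [ca|ac] := leP c a.
  by rewrite set_itv_ge ?preimage_set0 ?measure0 // bnd_simp -leNgt.
rewrite preimage_affine_itv /normal_prob !integral_itv_obnd_cbnd; first last.
- by apply/measurable_funTS/measurable_EFinP; exact: measurable_normal_pdf.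
- by apply/measurable_funTS/measurable_EFinP; exact: measurable_normal_pdf.
have k0 : k != 0 by rewrite gt_eqF.
have flo : f ((a + b) / k) = a by rewrite /f mulrC divfK // addrK.
have fhi : f ((c + b) / k) = c by rewrite /f mulrC divfK // addrK.
rewrite -[in RHS]flo -[in RHS]fhi integration_by_substitution_increasing.
- apply: eq_integral => x _; rewrite derive1_affine; congr EFin.
  exact/esym/normal_pdf_affine.
- by rewrite ler_pM2r ?invr_gt0 // lerD2r ltW.
- by move=> x y _ _ xy; rewrite /f ltrD2r ltr_pM2l.
- by rewrite derive1_affine => x _; exact: cst_continuous.
- by rewrite derive1_affine; exact: is_cvg_cst.
- by rewrite derive1_affine; exact: is_cvg_cst.
- split; first by move=> x _; exact: derivable_affine.
  + exact/cvg_at_right_filter/continuous_affine.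
  + exact/cvg_at_left_filter/continuous_affine.
- apply: continuous_subspaceT; apply: continuous_normal_pdf.
  by rewrite mulf_neq0.
Qed.

Lemma normal_prob_affine m sg A : sg != 0 -> measurable A ->
  normal_prob m sg (f @^-1` A) = normal_prob (f m) (k * sg) A.
Proof.
move=> sg0 mA.
pose g := f : measurableTypeR R -> measurableTypeR R.
have mg : measurable_fun setT g := measurable_affine.
(* the measure structure of [pushforward] is abstracted over [mg] *)
pose push : {measure set (measurableTypeR R) -> \bar R} :=
  pushforward (normal_prob m sg) g.
apply/esym/(@measure_ocitv_unique _ _ (push mg)) => //.
  by move=> n; rewrite (le_lt_trans (probability_le1 _ _)) ?ltry.
by move=> a c; exact/esym/normal_prob_affine_itv.
Qed.

End affine_normal.

Section gaussian_family.
Context {R : realType} {dT : measure_display} {T : measurableType dT}.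
Variable P : probability T R.

Lemma mutually_independent_comp (I : finType) (X : I -> T -> R)
    (g : I -> R -> R) :
  (forall i, measurable_fun setT (g i)) -> mutually_independent P X ->
  mutually_independent P (fun i => g i \o X i).
Proof.
move=> mg indX A mA; apply: (indX (fun i => g i @^-1` A i)) => i.
by rewrite -[X in measurable X]setTI; exact: mg.
Qed.

Lemma has_normal_law_affine (X : T -> R) m sg k b : 0 < k -> sg != 0 ->
  has_normal_law P X m sg ->
  has_normal_law P (fun w => k * X w - b) (k * m - b) (k * sg).
Proof.
move=> k0 sg0 lawX A mA; rewrite -normal_prob_affine //.
apply: (lawX (_ @^-1` A)); rewrite -[X in measurable X]setTI.
exact: measurable_affine.
Qed.

Lemma indep_gaussian_family_affine s d M (X : 'I_M -> T -> 'M[R]_(s, d))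
    mean sd (k : 'I_M -> R) (D : 'I_M -> 'M[R]_(s, d)) :
  (forall m, 0 < k m) -> (forall m, sd m != 0) ->
  indep_gaussian_family P X mean sd ->
  indep_gaussian_family P (fun m w => k m *: X m w - D m)
    (fun m i j => k m * mean m i j - D m i j) (fun m => k m * sd m).
Proof.
move=> k_gt0 sd0 [rvX [indX lawX]].
pose g m i j (x : R) := k m * x - D m i j.
have entryE m i j :
    (fun w => (k m *: X m w - D m) i j) = g m i j \o (fun w => X m w i j).
  by apply/funext => w; rewrite /= !mxE.
split; [|split].
- move=> m i j; rewrite /rv_meas entryE.
  by apply: measurableT_comp; [exact: measurable_affine | exact: rvX].
- have -> : (fun q : 'I_M * 'I_s * 'I_d =>
        fun w => (k q.1.1 *: X q.1.1 w - D q.1.1) q.1.2 q.2) =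
      fun q => g q.1.1 q.1.2 q.2 \o (fun w => X q.1.1 w q.1.2 q.2).
    by apply/funext => q; rewrite entryE.
  by apply: mutually_independent_comp => // q; exact: measurable_affine.
- by move=> m i j; rewrite entryE; exact: has_normal_law_affine.
Qed.

End gaussian_family.

Theorem proposition5 (R : realType) (dT : measure_display) (T : measurableType dT)
  (P : probability T R) (s d : nat)
  (alpha : forall M : nat, 'I_M -> R)
  (B : forall M : nat, 'I_M -> T -> 'M[R]_(s, d))
  (H : forall M : nat, 'I_M -> T -> 'M[R]_(s, s)) :
  (0 < s)%N -> (s < d)%N ->
  (forall M (m : 'I_M), 0 < alpha M m) ->
  (forall M, (0 < M)%N ->
     indep_gaussian_family P (B M)
       (fun m i j => if val i == val j then (Num.sqrt (alpha M m))^-1 else 0)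
       (fun m => Num.sqrt ((alpha M m)^-1))) ->
  (forall M (m : 'I_M), random_matrix (H M m)) ->
  (forall M, (0 < M)%N ->
     forall C : 'I_M -> T -> 'M[R]_(s, d),
       indep_gaussian_family P C (fun _ _ _ => 0) (fun _ => 1) ->
       (\int[P]_w cond (hcat (fun m => (C m w + pid_mx s)%R))
        < \int[P]_w cond (hcat (fun m => H M m w *m (C m w + pid_mx s)%R)))%E) ->
  forall M, (0 < M)%N ->
    (\int[P]_w cond ((M%:R)^-1 *:
         hcat (fun m => Num.sqrt (alpha M m) *: B M m w))%R
     < \int[P]_w cond ((M%:R)^-1 *:
         hcat (fun m => Num.sqrt (alpha M m) *: (H M m w *m B M m w)))%R)%E.
Proof.
move=> _ _ alpha_gt0 hB _ hC M M0.
pose ka m : R := Num.sqrt (alpha M m).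
have ka_gt0 m : 0 < ka m by rewrite sqrtr_gt0.
pose C : 'I_M -> T -> 'M[R]_(s, d) := fun m w => ka m *: B M m w - pid_mx s.
have C_std : indep_gaussian_family P C (fun _ _ _ => 0) (fun _ => 1).
  have -> : (fun _ _ _ => 0) = fun m (i : 'I_s) (j : 'I_d) =>
      ka m * (if val i == val j then (ka m)^-1 else 0) - pid_mx s i j.
    apply/funext => m; apply/funext => i; apply/funext => j.
    rewrite mxE ltn_ord andbT; case: (_ == _); last by rewrite mulr0 subrr.
    by rewrite mulfV ?subrr ?gt_eqF.
  have -> : (fun _ => 1) = fun m => ka m * Num.sqrt (alpha M m)^-1.
    apply/funext => m; rewrite -sqrtrM ?ltW // mulfV ?sqrtr1 // gt_eqF //.
  apply: indep_gaussian_family_affine => [//|m|]; last exact: hB.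
  by rewrite gt_eqF // sqrtr_gt0 invr_gt0.
have M_neq0 : (M%:R : R)^-1 != 0 by rewrite invr_eq0 pnatr_eq0 -lt0n.
have CE m w : C m w + pid_mx s = ka m *: B M m w by rewrite subrK.
have lt_eq (a b a' b' : \bar R) : (a < b -> a = a' -> b = b' -> a' < b')%E.
  by move=> ab <- <-.
apply: (lt_eq _ _ _ _ (hC M M0 C C_std)).
  apply: eq_integral => w _; rewrite [RHS](condZ _ M_neq0).
  by congr (cond (hcat _)); apply/funext => m; rewrite CE.
apply: eq_integral => w _; rewrite [RHS](condZ _ M_neq0).
by congr (cond (hcat _)); apply/funext => m; rewrite CE -scalemxAr.
Qed.
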